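(* For every $X\in\overline\Omega_{1/6}$, $$\|\nabla h(X)\|_F^2\ge\|\nabla g(X)\|_F^2+\Big(\frac23\beta^2-4\beta M_1\Big)\|X^\top X-I_p\|_F^2 .$$
   Context: $f:\mathbb{R}^{n\times p}\to\mathbb{R}$ is differentiable with $f,\nabla f$ locally Lipschitz. $\mathcal{A}(X):=\frac32I_p-\frac12X^\top X$, $g(X):=f(X\mathcal{A}(X))$, $h(X):=g(X)+\frac\beta4\|X^\top X-I_p\|_F^2$ with $\beta>0$, $G(X):=\nabla f(Y)|_{Y=X\mathcal{A}(X)}$. $\overline\Omega_r:=\{X:\|X^\top X-I_p\|_F\le r\}$; $\Omega:=\{X:\|X\|_2\le1+\frac1{12}\}$; $M_1:=\sup_{X\in\Omega}\|G(X)\|_F$. *)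

From HB Require Import structures.
From mathcomp Require Import all_boot all_order all_algebra.
From mathcomp Require Import all_classical all_reals all_analysis.
Set Implicit Arguments. Unset Strict Implicit. Unset Printing Implicit Defensive.
Import Order.TTheory GRing.Theory Num.Theory.
Import numFieldNormedType.Exports.
Local Open Scope classical_set_scope.
Local Open Scope ring_scope.

Section Defs.
Variable R : realType.

Definition frob (m k : nat) (X : 'M[R]_(m, k)) : R :=
  Num.sqrt (\sum_(i < m) \sum_(j < k) X i j ^+ 2).

Definition spec_norm (m k : nat) (X : 'M[R]_(m, k)) : R :=
  sup [set frob (X *m v) | v in [set v : 'cV[R]_k | frob v = 1]].

Definition grad (m k : nat) (F : 'M[R]_(m, k) -> R) (X : 'M[R]_(m, k)) : 'M[R]_(m, k) :=
  \matrix_(i, j) derive F X (delta_mx i j).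

(* locally Lipschitz (any norms; the library norm on matrices is used) *)
Definition locally_lipschitz (V W : normedModType R) (F : V -> W) : Prop :=
  forall x : V, exists2 r : R, 0 < r & exists L : R,
    forall y z : V, `|y - x| < r -> `|z - x| < r -> `|F y - F z| <= L * `|y - z|.

Variables n p : nat.

Definition Acal (X : 'M[R]_(n, p)) : 'M[R]_p :=
  (3 / 2 : R)%:M - (1 / 2 : R) *: (X^T *m X).

Definition gfun (f : 'M[R]_(n, p) -> R) (X : 'M[R]_(n, p)) : R :=
  f (X *m Acal X).

Definition hfun (beta : R) (f : 'M[R]_(n, p) -> R) (X : 'M[R]_(n, p)) : R :=
  gfun f X + beta / 4 * frob (X^T *m X - 1%:M) ^+ 2.

Definition Gfun (f : 'M[R]_(n, p) -> R) (X : 'M[R]_(n, p)) : 'M[R]_(n, p) :=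
  grad f (X *m Acal X).

Definition Omega : set 'M[R]_(n, p) := [set X | spec_norm X <= 1 + 1 / 12].

Definition M1 (f : 'M[R]_(n, p) -> R) : R :=
  sup [set frob (Gfun f X) | X in Omega].

End Defs.

From HB Require Import structures.
From mathcomp Require Import all_boot all_order all_algebra.
From mathcomp Require Import all_classical all_reals all_analysis.
From mathcomp Require Import ring lra.
Set Implicit Arguments. Unset Strict Implicit. Unset Printing Implicit Defensive.
Import Order.TTheory GRing.Theory Num.Theory.
Import numFieldNormedType.Exports.
Local Open Scope classical_set_scope.
Local Open Scope ring_scope.

(* Write S := X^T X - I.  The penalty term contributes beta X S to the gradient, so
   |grad h|^2 = |grad g|^2 + 2 beta <grad g, X S> + beta^2 |X S|^2.
   The cross term is a directional derivative of g = f o (X |-> X A(X)); along X S the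
   derivative of X A(X) is -3/2 X S^2, whence <grad g, X S> = -3/2 <G(X), X S^2>.
   As |S| <= 1/6, left multiplication by X changes squared Frobenius norms by a factor in
   [5/6, 7/6]: thus |X S|^2 >= 5/6 |S|^2 and |X S^2| <= 4/3 |S|^2, and X lies in Omega,
   where |G| <= M1 (G is continuous and Omega is bounded). *)

Section FrobeniusInnerProduct.
Variable R : comPzRingType.

Definition dotmx (m k : nat) (A B : 'M[R]_(m, k)) : R :=
  \sum_(i < m) \sum_(j < k) A i j * B i j.

Variables m k : nat.
Implicit Types A B C : 'M[R]_(m, k).

Lemma dotmxC A B : dotmx A B = dotmx B A.
Proof. by apply: eq_bigr => i _; apply: eq_bigr => j _; rewrite mulrC. Qed.

Lemma dotmxDl A B C : dotmx (A + B) C = dotmx A C + dotmx B C.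
Proof.
rewrite /dotmx -big_split; apply: eq_bigr => i _; rewrite -big_split.
by apply: eq_bigr => j _; rewrite !mxE mulrDl.
Qed.

Lemma dotmxDr A B C : dotmx A (B + C) = dotmx A B + dotmx A C.
Proof. by rewrite dotmxC dotmxDl !(dotmxC A). Qed.

Lemma dotmxZl a A B : dotmx (a *: A) B = a * dotmx A B.
Proof.
rewrite /dotmx mulr_sumr; apply: eq_bigr => i _; rewrite mulr_sumr.
by apply: eq_bigr => j _; rewrite !mxE mulrA.
Qed.

Lemma dotmxZr a A B : dotmx A (a *: B) = a * dotmx A B.
Proof. by rewrite dotmxC dotmxZl dotmxC. Qed.

Lemma dotmxNl A B : dotmx (- A) B = - dotmx A B.
Proof. by rewrite -scaleN1r dotmxZl mulN1r. Qed.

Lemma dotmxNr A B : dotmx A (- B) = - dotmx A B.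
Proof. by rewrite dotmxC dotmxNl dotmxC. Qed.

Lemma dotmx0l B : dotmx 0 B = 0.
Proof. by rewrite -(scale0r 0) dotmxZl mul0r. Qed.

Lemma dotmx_tr A B : dotmx A^T B^T = dotmx A B.
Proof.
by rewrite /dotmx exchange_big; apply: eq_bigr => i _; apply: eq_bigr => j _; rewrite !mxE.
Qed.

Lemma dotmx_delta A i j : dotmx A (delta_mx i j) = A i j.
Proof.
rewrite /dotmx (bigD1 i) //= [X in _ + X]big1 ?addr0 => [|i' ne]; last first.
  by apply: big1 => j' _; rewrite mxE (negbTE ne) mulr0.
rewrite (bigD1 j) //= [X in _ + X]big1 ?addr0 => [|j' ne]; last first.
  by rewrite mxE (negbTE ne) andbF mulr0.
by rewrite mxE !eqxx mulr1.
Qed.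

End FrobeniusInnerProduct.

Lemma dotmx_mull (R : comPzRingType) m l k (A : 'M[R]_(m, l)) (B : 'M[R]_(l, k)) C :
  dotmx (A *m B) C = dotmx B (A^T *m C).
Proof.
rewrite /dotmx.
under eq_bigr => i _ do under eq_bigr => j _ do rewrite mxE mulr_suml.
under [RHS]eq_bigr => i _ do under eq_bigr => j _ do rewrite mxE mulr_sumr.
rewrite exchange_big; under eq_bigr => j _ do rewrite exchange_big.
rewrite exchange_big; apply: eq_bigr => i _; apply: eq_bigr => j _.
by apply: eq_bigr => l' _; rewrite !mxE; ring.
Qed.

Section FrobeniusNorm.
Variable R : realType.

Variables m k : nat.
Implicit Types A B : 'M[R]_(m, k).

Lemma dotmx_self_ge0 A : 0 <= dotmx A A.
Proof. by apply: sumr_ge0 => i _; apply: sumr_ge0 => j _; rewrite -expr2 sqr_ge0. Qed.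

Lemma frob_sq A : frob A ^+ 2 = dotmx A A.
Proof.
rewrite sqr_sqrtr; last by apply: sumr_ge0 => i _; apply: sumr_ge0 => j _; rewrite sqr_ge0.
by apply: eq_bigr => i _; apply: eq_bigr => j _; rewrite expr2.
Qed.

Lemma frob_ge0 A : 0 <= frob A.
Proof. exact: sqrtr_ge0. Qed.

Lemma frob_eq0 A : frob A = 0 -> A = 0.
Proof.
move=> /(congr1 (fun x => x ^+ 2)); rewrite frob_sq expr0n /= => /eqP.
rewrite psumr_eq0 => [/allP A0|i _]; last first.
  by apply: sumr_ge0 => j _; rewrite -expr2 sqr_ge0.
apply/matrixP => i j; rewrite mxE; move/implyP: (A0 i (mem_index_enum i)).
rewrite psumr_eq0 => [/(_ isT)/allP/(_ j (mem_index_enum j))/implyP/(_ isT)|j' _].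
  by rewrite mulf_eq0 orbb => /eqP.
by rewrite -expr2 sqr_ge0.
Qed.

Lemma frob_sqrDZ A B (c : R) :
  frob (A + c *: B) ^+ 2 = frob A ^+ 2 + 2 * c * dotmx A B + c ^+ 2 * frob B ^+ 2.
Proof. by rewrite !frob_sq !(dotmxDl, dotmxDr, dotmxZl, dotmxZr) (dotmxC B); ring. Qed.

Lemma dotmx_le_frob A B : `|dotmx A B| <= frob A * frob B.
Proof.
have [a0|an0] := eqVneq (frob A) 0; first by rewrite a0 mul0r (frob_eq0 a0) dotmx0l normr0.
have [b0|bn0] := eqVneq (frob B) 0.
  by rewrite b0 mulr0 (frob_eq0 b0) dotmxC dotmx0l normr0.
have ab_gt0 : 0 < frob A * frob B by rewrite mulr_gt0 // lt0r ?an0 ?bn0 frob_ge0.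
have hD := dotmx_self_ge0 (frob B *: A + frob A *: B).
have hB := dotmx_self_ge0 (frob B *: A - frob A *: B).
rewrite !(dotmxDl, dotmxDr, dotmxNl, dotmxNr, dotmxZl, dotmxZr) (dotmxC B A) in hD hB.
move: (frob A) (frob B) (frob_sq A) (frob_sq B) ab_gt0 hD hB => a b <- <- ab_gt0 hD hB.
rewrite ler_norml; apply/andP; split; rewrite -subr_ge0 -(pmulr_rge0 _ ab_gt0); nra.
Qed.

Lemma frob_delta i j : frob (delta_mx i j : 'M[R]_(m, k)) = 1.
Proof.
have := frob_sq (delta_mx i j : 'M[R]_(m, k)).
by rewrite dotmx_delta mxE !eqxx => /eqP; rewrite sqrp_eq1 ?frob_ge0 // => /eqP.
Qed.

Lemma mxentry_le_frob A i j : `|A i j| <= frob A.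
Proof.
by rewrite -(dotmx_delta A i j) -[leRHS]mulr1 -(frob_delta i j) dotmx_le_frob.
Qed.

Lemma dotmx_rows A B : dotmx A B = \sum_i dotmx (row i A) (row i B).
Proof. by apply: eq_bigr => i _; rewrite /dotmx big_ord1; apply: eq_bigr => j _; rewrite !mxE. Qed.

End FrobeniusNorm.

Lemma mulmx_dotmx (R : comPzRingType) m l k (A : 'M[R]_(m, l)) (B : 'M[R]_(l, k)) i j :
  (A *m B) i j = dotmx (row i A) (row j B^T).
Proof. by rewrite mxE /dotmx big_ord1; apply: eq_bigr => h _; rewrite !mxE. Qed.

Lemma frob_mulmx (R : realType) m l k (A : 'M[R]_(m, l)) (B : 'M[R]_(l, k)) :
  frob (A *m B) <= frob A * frob B.
Proof.
rewrite -ler_sqr ?nnegrE ?mulr_ge0 ?frob_ge0 // exprMn !frob_sq -(dotmx_tr B B).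
rewrite !dotmx_rows mulr_suml; apply: ler_sum => i _.
rewrite mulr_sumr {1}/dotmx big_ord1; apply: ler_sum => j _.
rewrite [row i _ 0 j]mxE mulmx_dotmx -(frob_sq (row i A)) -(frob_sq (row j B^T)).
have := frob_ge0 (row i A); have := frob_ge0 (row j B^T).
have := dotmx_le_frob (row i A) (row j B^T); rewrite ler_norml => /andP[]; nra.
Qed.

Section NearlyOrthonormal.
Variables (R : realType) (n p : nat) (X : 'M[R]_(n, p)).
Local Notation S := (X^T *m X - 1%:M).

Lemma frob_mulmx_sq_dev k (M : 'M[R]_(p, k)) :
  `|frob (X *m M) ^+ 2 - frob M ^+ 2| <= frob S * frob M ^+ 2.
Proof.
have -> : frob (X *m M) ^+ 2 - frob M ^+ 2 = dotmx M (S *m M).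
  by rewrite !frob_sq dotmx_mull mulmxA mulmxBl mul1mx dotmxDr dotmxNr.
apply: le_trans (dotmx_le_frob _ _) _.
have := frob_mulmx S M; have := frob_ge0 M; nra.
Qed.

Lemma frob_mulmx_sq_within e k (M : 'M[R]_(p, k)) : frob S <= e ->
  (1 - e) * frob M ^+ 2 <= frob (X *m M) ^+ 2 <= (1 + e) * frob M ^+ 2.
Proof.
move=> hS; have := frob_mulmx_sq_dev M; rewrite ler_norml => /andP[lo hi].
have M2_ge0 := sqr_ge0 (frob M); apply/andP; split; nra.
Qed.

Lemma frob_orth_defect_cubed : frob S <= 1 / 6 -> frob (X *m S *m S) <= 4 / 3 * frob S ^+ 2.
Proof.
move=> hS; rewrite -mulmxA.
have /andP[_ hXSS] := frob_mulmx_sq_within (S *m S) hS.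
have hSS := frob_mulmx S S; have := frob_ge0 (S *m S); have := frob_ge0 S.
have := frob_ge0 (X *m (S *m S)); nra.
Qed.

End NearlyOrthonormal.

Section SpectralNorm.
Variables (R : realType) (n p : nat) (Y : 'M[R]_(n, p)).

Lemma spec_norm_le c : 0 <= c ->
  (forall v : 'cV[R]_p, frob v = 1 -> frob (Y *m v) <= c) -> spec_norm Y <= c.
Proof.
move=> c0 hY; rewrite /spec_norm.
set E := [set _ | _ in _]; have [->|/set0P [x Ex]] := eqVneq E set0; first by rewrite sup0.
by apply: ge_sup => [|_ [v /hY + <-]]; first exists x.
Qed.

Lemma mxentry_le_spec_norm i j : `|Y i j| <= spec_norm Y.
Proof.
pose e : 'cV[R]_p := delta_mx j 0.
have hE : has_sup [set frob (Y *m v) | v in [set v : 'cV[R]_p | frob v = 1]].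
  split; first by exists (frob (Y *m e)), e; rewrite //= frob_delta.
  exists (frob Y) => _ [v /= v1 <-].
  by apply: le_trans (frob_mulmx _ _) _; rewrite v1 mulr1.
apply: le_trans (sup_upper_bound hE _); last by exists e; rewrite //= frob_delta.
by rewrite -colE (_ : Y i j = col j Y i 0) ?mxentry_le_frob // mxE.
Qed.

End SpectralNorm.

Lemma Omega_near_orth (R : realType) n p (X : 'M[R]_(n, p)) :
  frob (X^T *m X - 1%:M) <= 1 / 6 -> Omega X.
Proof.
move=> hS; apply: spec_norm_le => // v v1.
have /andP[_] := frob_mulmx_sq_within v hS; rewrite v1 expr1n mulr1 => hXv.
rewrite -[_ <= _](@ler_sqr _ (frob (X *m v))) ?nnegrE ?frob_ge0 //.
by apply: le_trans hXv _; lra.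
Qed.

Section DerivativeTools.
Variable R : realType.

Lemma is_derive_quartic (V W : normedModType R) (F : V -> W) (x v : V) (c1 c2 c3 c4 : W) :
  (forall t : R, F (t *: v + x) - F x =
     t *: c1 + t ^+ 2 *: c2 + t ^+ 3 *: c3 + t ^+ 4 *: c4) ->
  is_derive x v F c1.
Proof.
move=> HF; pose Q (h : R) := c1 + h *: c2 + h ^+ 2 *: c3 + h ^+ 3 *: c4.
have QE : {near 0^', Q =1 fun h => h^-1 *: ((F \o shift x) (h *: v) - F x)}.
  near=> h; have h0 : h != 0 by near: h; exact: nbhs_dnbhs_neq.
  rewrite /= /shift HF /Q !exprS expr0 mulr1.
  by rewrite !scalerDr !scalerA !mulrA mulVf // !mul1r scale1r.
have Qc : {for 0, continuous Q}.
  apply: cvgD; [apply: cvgD; [apply: cvgD|]|]; first exact: cvg_cst.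
  - by apply: cvgZr_tmp; exact: cvg_id.
  - by apply: cvgZr_tmp; exact: exprn_continuous.
  - by apply: cvgZr_tmp; exact: exprn_continuous.
have Q0 : Q 0 = c1 by rewrite /Q !expr0n /= !scale0r !addr0.
have L : (fun h => h^-1 *: ((F \o shift x) (h *: v) - F x)) @ 0^' --> c1.
  by apply: cvg_trans (near_eq_cvg QE) _; rewrite -Q0; exact: cvg_within_filter Qc.
apply: DeriveDef; first by apply/cvg_ex; exists c1.
exact: cvg_lim L.
Unshelve. all: by end_near.
Qed.

Lemma locally_lipschitz_continuous (V W : normedModType R) (F : V -> W) :
  locally_lipschitz F -> continuous F.
Proof.
move=> FL x; have [r r0 [L HL]] := FL x.
have L1_gt0 : 0 < `|L| + 1 by rewrite ltr_pwDr // normr_ge0.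
have near_x eps : 0 < eps -> \forall y \near x, `|x - y| < eps.
  exact: (@cvgr_dist_lt _ _ _ (nbhs x) _ id x (@cvg_id _ (nbhs x))).
apply/cvgrPdist_le => e e0; near=> y.
apply: le_trans (HL x y _ _) _; first by rewrite subrr normr0.
  by rewrite distrC; near: y; exact: near_x.
have : `|x - y| < e / (`|L| + 1) by near: y; apply: near_x; rewrite divr_gt0.
rewrite ltr_pdivlMr // => hy.
have := normr_ge0 L; have := normr_ge0 (x - y); have := ler_norm L; nra.
Unshelve. all: by end_near.
Qed.

Lemma differentiable_bigsum (V W : normedModType R) k (F : 'I_k -> V -> W) x :
  (forall i, differentiable (F i) x) -> differentiable (fun y => \sum_i F i y) x.
Proof.
move=> dF; rewrite (_ : (fun y => _) = \sum_i F i); first exact: differentiable_sum.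
by apply/funext => y; rewrite fct_sumE.
Qed.

Lemma differentiable_mx_entries (V : normedModType R) m k (F : V -> 'M[R]_(m, k)) x :
  (forall i j, differentiable (fun y => F y i j) x) -> differentiable F x.
Proof.
move=> dF; rewrite (_ : F = fun y => \sum_i \sum_j F y i j *: delta_mx i j).
  by do 2!apply: differentiable_bigsum => ?; exact: differentiableZl.
by apply/funext => y; exact: matrix_sum_delta.
Qed.

Lemma derive_grad m k (F : 'M[R]_(m, k) -> R) (Y W : 'M[R]_(m, k)) :
  differentiable F Y -> 'D_W F Y = dotmx (grad F Y) W.
Proof.
move=> dF; rewrite deriveE // {1}(matrix_sum_delta W) !linear_sum /dotmx.
apply: eq_bigr => i _; rewrite linear_sum; apply: eq_bigr => j _.
by rewrite linearZ /= mxE deriveE // mulrC.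
Qed.

End DerivativeTools.

Lemma trmx_scaleD (R : pzRingType) m k (t : R) (A B : 'M[R]_(m, k)) :
  (t *: A + B)^T = t *: A^T + B^T.
Proof. by apply/matrixP => i j; rewrite !mxE. Qed.

Section NewtonSchulz.
Variables (R : realType) (n p : nat).
Implicit Types X V Y : 'M[R]_(n, p).

(* One Newton-Schulz iteration towards the orthonormal polar factor of [X]. *)
Definition ns_step X : 'M[R]_(n, p) := X *m Acal X.

Definition ns_step_deriv X V : 'M[R]_(n, p) :=
  V *m Acal X - (1 / 2 : R) *: (X *m (X^T *m V + V^T *m X)).

Lemma is_derive_ns_step X V : is_derive X V ns_step (ns_step_deriv X V).
Proof.
apply: (@is_derive_quartic _ _ _ _ _ _ _
  (- (1 / 2 : R) *: (X *m (V^T *m V) + V *m (X^T *m V + V^T *m X)))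
  (- (1 / 2 : R) *: (V *m (V^T *m V))) 0) => t.
rewrite /ns_step /ns_step_deriv /Acal trmx_scaleD scaler0 addr0.
do 4 rewrite ?mulmxDl ?mulmxDr ?mulmxN ?mulNmx -?scalemxAl -?scalemxAr ?scalerA.
by apply/matrixP => i j; rewrite !mxE; ring.
Qed.

Lemma differentiable_ns_step X : differentiable ns_step X.
Proof.
have dcoord i j : differentiable (fun Y : 'M[R]_(n, p) => Y i j) X.
  exact: differentiable_coord.
apply: differentiable_mx_entries => i j.
under eq_fun do rewrite mxE.
apply: differentiable_bigsum => h; apply: differentiableM => //.
rewrite /Acal; under eq_fun do rewrite !mxE.
apply: differentiableD; first exact: differentiable_cst.
apply: differentiableN; apply: differentiableM; first exact: differentiable_cst.
under eq_fun do under eq_bigr do rewrite mxE.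
by apply: differentiable_bigsum => l; exact: differentiableM.
Qed.

End NewtonSchulz.

Arguments ns_step {R n p}.

Section OrthogonalityDefect.
Variables (R : realType) (n p : nat) (X : 'M[R]_(n, p)).
Local Notation S := (X^T *m X - 1%:M).

Lemma orth_defect_sym : S^T = S.
Proof. by rewrite linearB /= trmx_mul trmxK trmx1. Qed.

Lemma dotmx_orth_defect V : dotmx S (X^T *m V + V^T *m X) = 2 * dotmx (X *m S) V.
Proof.
rewrite dotmxDr -[dotmx S (V^T *m X)]dotmx_tr orth_defect_sym trmx_mul trmxK.
by rewrite dotmxC dotmx_mull trmxK dotmxC -mulr2n mulr_natl.
Qed.

Lemma ns_step_deriv_orth_defect : ns_step_deriv X (X *m S) = - (3 / 2 : R) *: (X *m S *m S).
Proof.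
have XX : X^T *m X = S + 1%:M by rewrite subrK.
rewrite /ns_step_deriv /Acal trmx_mul orth_defect_sym !mulmxA XX -!mulmxA XX.
do 4 rewrite ?mulmxDl ?mulmxDr ?mulmxN ?mulNmx ?mulmxBr ?mulmxBl
  -?scalemxAl -?scalemxAr ?scalerA ?mul_mx_scalar ?mul_scalar_mx ?mulmx1 ?mul1mx.
rewrite !mulmxA; move: (X *m X^T *m X *m X^T *m X) (X *m X^T *m X) => A5 A3.
by apply/matrixP => i j; rewrite !mxE; ring.
Qed.

End OrthogonalityDefect.

Section Penalty.
Variables (R : realType) (n p : nat) (beta : R).
Implicit Types X V : 'M[R]_(n, p).

Definition penalty X : R := beta / 4 * frob (X^T *m X - 1%:M) ^+ 2.

Lemma is_derive_penalty X V :
  is_derive X V penalty (beta * dotmx (X *m (X^T *m X - 1%:M)) V).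
Proof.
set S := X^T *m X - 1%:M; set D1 := X^T *m V + V^T *m X; set D2 := V^T *m V.
have shiftE t : (t *: V + X)^T *m (t *: V + X) - 1%:M = S + t *: D1 + t ^+ 2 *: D2.
  rewrite trmx_scaleD !mulmxDl !mulmxDr -!scalemxAl -!scalemxAr scalerA -expr2.
  by apply/matrixP => i j; rewrite !mxE; ring.
have -> : beta * dotmx (X *m S) V = beta / 4 * (2 * dotmx S D1).
  by rewrite dotmx_orth_defect; field.
apply: (@is_derive_quartic _ _ _ _ _ _ _
  (beta / 4 * (2 * dotmx S D2 + dotmx D1 D1)) (beta / 4 * (2 * dotmx D1 D2))
  (beta / 4 * dotmx D2 D2)) => t.
rewrite /penalty shiftE -/S; clearbody S D1 D2.
rewrite !frob_sq !(dotmxDl, dotmxDr, dotmxZl, dotmxZr).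
rewrite (dotmxC D1 S) (dotmxC D2 S) (dotmxC D2 D1) /GRing.scale /=; ring.
Qed.

End Penalty.

Section Objectives.
Variables (R : realType) (n p : nat) (f : 'M[R]_(n, p) -> R).
Hypothesis f_diff : forall Y, differentiable f Y.
Implicit Types X V : 'M[R]_(n, p).

Lemma differentiable_gfun X : differentiable (gfun f) X.
Proof. exact: differentiable_comp (differentiable_ns_step X) (f_diff _). Qed.

Lemma derive_gfun X V : 'D_V (gfun f) X = dotmx (Gfun f X) (ns_step_deriv X V).
Proof.
have dN := differentiable_ns_step X; have dG := differentiable_gfun X.
rewrite (_ : gfun f = f \o ns_step) // deriveE // diff_comp //= -(deriveE _ dN).
by rewrite (@derive_val _ _ _ _ _ _ _ (is_derive_ns_step X V)) -deriveE ?derive_grad.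
Qed.

Lemma dotmx_grad_gfun_orth_defect X :
  dotmx (grad (gfun f) X) (X *m (X^T *m X - 1%:M)) =
  - (3 / 2) * dotmx (Gfun f X) (X *m (X^T *m X - 1%:M) *m (X^T *m X - 1%:M)).
Proof.
rewrite -derive_grad; last exact: differentiable_gfun.
by rewrite derive_gfun ns_step_deriv_orth_defect dotmxZr.
Qed.

Lemma grad_hfun beta X :
  grad (hfun beta f) X = grad (gfun f) X + beta *: (X *m (X^T *m X - 1%:M)).
Proof.
apply/matrixP => i j; rewrite !mxE.
have dP := is_derive_penalty beta X (delta_mx i j).
rewrite (_ : hfun beta f = gfun f + penalty beta) // deriveD; last first.
- exact: (@ex_derive _ _ _ _ _ _ _ dP).
- exact/diff_derivable/differentiable_gfun.
by rewrite (@derive_val _ _ _ _ _ _ _ dP) dotmx_delta mxE.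
Qed.

End Objectives.

Section MaxNorm.
Variable R : realType.

Lemma mxentry_le_norm m k (A : 'M[R]_(m, k)) i j : `|A i j| <= `|A|.
Proof.
rewrite [leRHS]/Num.Def.normr /= mx_normrE.
exact: (le_bigmax _ (fun ij : 'I_m * 'I_k => `|A ij.1 ij.2|) (i, j)).
Qed.

Lemma frob_sq_le_norm m k (A : 'M[R]_(m, k)) : frob A ^+ 2 <= (m * k)%:R * `|A| ^+ 2.
Proof.
have -> : (m * k)%:R * `|A| ^+ 2 = \sum_(i < m) \sum_(j < k) `|A| ^+ 2.
  by rewrite !sumr_const !card_ord -mulrnA mulr_natl mulnC.
rewrite frob_sq; apply: ler_sum => i _; apply: ler_sum => j _.
by rewrite -expr2 -real_normK ?num_real // lerXn2r ?nnegrE ?normr_ge0 ?mxentry_le_norm.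
Qed.

Lemma vec_mx_continuous m k : continuous (vec_mx : 'rV[R]_(m * k) -> 'M[R]_(m, k)).
Proof.
apply: locally_lipschitz_continuous => x; exists 1 => //; exists 1 => y z _ _.
rewrite mul1r -linearB /= [leLHS]/Num.Def.normr /= mx_normrE.
by apply: bigmax_le => [|ij _]; rewrite ?normr_ge0 // mxE mxentry_le_norm.
Qed.

End MaxNorm.

Lemma frob_Gfun_le_M1 (R : realType) n p (f : 'M[R]_(n, p) -> R) X :
  (forall Y, differentiable f Y) -> locally_lipschitz (grad f) -> Omega X ->
  frob (Gfun f X) <= M1 f.
Proof.
move=> f_diff gradf_lip OX.
suff hs : has_sup [set frob (Gfun f Y) | Y in @Omega R n p].
  by apply: sup_upper_bound hs _ _; exists X.
split; first by exists (frob (Gfun f X)), X.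
pose r : R := 1 + 1 / 12.
pose B := [set v : 'rV[R]_(n * p) | forall k, `[- r, r]%classic (v ord0 k)].
have cB : compact B.
  by apply: (@rV_compact _ _ (fun=> `[- r, r]%classic)) => k; exact: segment_compact.
have cG : continuous (Gfun f \o vec_mx).
  move=> v; apply: continuous_comp; first exact: vec_mx_continuous.
  apply: (@continuous_comp _ _ _ ns_step (grad f)).
    exact/differentiable_continuous/differentiable_ns_step.
  exact: locally_lipschitz_continuous gradf_lip _.
have [M [_ GB]] := compact_bounded (continuous_compact (continuous_subspaceT cG) cB).
exists ((n * p)%:R * (M + 1) ^+ 2 + 1) => _ [Y OY <-].
have BY : B (mxvec Y).
  move=> k; case/mxvec_indexP: k => i j; rewrite mxvecE /= in_itv /= -ler_norml.
  exact: le_trans (mxentry_le_spec_norm _ _ _) OY.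
have GY : `|Gfun f Y| <= M + 1.
  by apply: GB; [rewrite ltrDl | exists (mxvec Y); rewrite //= mxvecK].
have hC : frob (Gfun f Y) ^+ 2 <= (n * p)%:R * (M + 1) ^+ 2.
  apply: le_trans (frob_sq_le_norm _) _; rewrite ler_wpM2l // lerXn2r ?nnegrE //.
  exact: le_trans (normr_ge0 _) GY.
have := sqr_ge0 (frob (Gfun f Y) - 1); nra.
Qed.

Unset Implicit Arguments.

Theorem mainTheorem16 (R : realType) (n p : nat) (f : 'M[R]_(n, p) -> R) (beta : R)
  (f_diff : forall X : 'M[R]_(n, p), differentiable f X)
  (f_lip : locally_lipschitz f)
  (gradf_lip : locally_lipschitz (grad f))
  (beta_gt0 : 0 < beta)
  (X : 'M[R]_(n, p))
  (hX : frob (X^T *m X - 1%:M) <= 1 / 6) :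
  frob (grad (hfun beta f) X) ^+ 2 >=
    frob (grad (gfun f) X) ^+ 2
    + (2 / 3 * beta ^+ 2 - 4 * beta * M1 f) * frob (X^T *m X - 1%:M) ^+ 2.
Proof.
rewrite grad_hfun // frob_sqrDZ dotmx_grad_gfun_orth_defect //.
set S := X^T *m X - 1%:M in hX *.
have G_le : frob (Gfun f X) <= M1 f.
  exact: frob_Gfun_le_M1 f_diff gradf_lip (Omega_near_orth hX).
have /andP[XS_ge _] := frob_mulmx_sq_within S hX.
have cross : dotmx (Gfun f X) (X *m S *m S) <= M1 f * (4 / 3 * frob S ^+ 2).
  apply: le_trans (ler_norm _) _; apply: le_trans (dotmx_le_frob _ _) _.
  by apply: ler_pM; rewrite ?frob_ge0 ?frob_orth_defect_cubed.
have := sqr_ge0 (frob S); have := frob_ge0 S; nra.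
Qed.
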